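(* Let $(X,T)$ be a Cantor minimal system and let $\Theta:E(X,T)\to K^0(X,T)$ be the injective homomorphism given by $\Theta(\theta)=\lfloor\theta\rfloor[1_X]+[1_{U_{\{\theta\}}}]$, where for $t\in[0,1)\cap E(X,T)$, $U_t$ is a clopen set with $1_{U_t}-t\mathbf 1$ a real coboundary. Then the quotient group $K^0(X,T)/\Theta(E(X,T))$ is torsion-free.
   Context: A Cantor minimal system is a homeomorphism $T$ of a Cantor set $X$ with all orbits dense. $E(X,T)=\{\theta\in\mathbb R:\exp(2\pi i\theta)\text{ is a continuous eigenvalue of } T\}$, where $\lambda$ is a continuous eigenvalue if $f\circ T=\lambda f$ for some continuous $f:X\to\mathbb S^1$. A real coboundary is $F-F\circ T$ with $F\in C(X,\mathbb R)$; such clopen sets $U_t$ exist ($U_0=\emptyset$), and $\Theta$ does not depend on their choice. $\{\theta\}=\theta-\lfloor\theta\rfloor$. $K^0(X,T)=C(X,\mathbb Z)/\{f-f\circ T:f\in C(X,\mathbb Z)\}$, $[f]$ the class of $f$. *)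

From HB Require Import structures.
From mathcomp Require Import all_boot all_order all_algebra.
From mathcomp Require Import all_classical all_reals all_analysis.
Set Implicit Arguments. Unset Strict Implicit. Unset Printing Implicit Defensive.
Import Order.TTheory GRing.Theory Num.Theory.
Import numFieldNormedType.Exports.
Local Open Scope classical_set_scope.
Local Open Scope ring_scope.

Section CantorDefs.
Variables (R : realType) (X : pseudoMetricType R).

(* A Cantor set: nonempty, compact, Hausdorff, perfect, zero-dimensional,
   metrizable (X carries a metric structure). *)
Definition cantor_set : Prop := cantor_like X /\ [set: X] !=set0.

Definition homeo (T Tinv : X -> X) : Prop :=
  [/\ continuous T, continuous Tinv, cancel T Tinv & cancel Tinv T].

Definition zit (T Tinv : X -> X) (n : int) (x : X) : X :=
  match n with
  | Posz k => iter k T x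
  | Negz k => iter k.+1 Tinv x
  end.

Definition orbit (T Tinv : X -> X) (x : X) : set X :=
  [set y | exists n : int, y = zit T Tinv n x].

Definition minimal (T Tinv : X -> X) : Prop :=
  forall x, closure (orbit T Tinv x) = [set: X].

(* theta \in E(X,T): exp(2 pi i theta) is a continuous eigenvalue, i.e.
   there is a continuous f = (c, s) : X -> S^1 (S^1 the unit circle in R^2 = C)
   with f (T x) = exp(2 pi i theta) * f x (complex multiplication written out). *)
Definition eigen_angle (T : X -> X) (theta : R) : Prop :=
  exists c s : X -> R,
    [/\ continuous c, continuous s,
        (forall x, c x ^+ 2 + s x ^+ 2 = 1) &
        (forall x,
           c (T x) = cos (2 * pi * theta) * c x - sin (2 * pi * theta) * s x /\
           s (T x) = sin (2 * pi * theta) * c x + cos (2 * pi * theta) * s x)].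

(* continuity of an integer-valued function (Z with the discrete topology) *)
Definition cont_int (f : X -> int) : Prop :=
  forall k : int, open (f @^-1` [set k]).

Definition clopen_set (U : set X) : Prop := open U /\ closed U.

Definition int_coboundary (T : X -> X) (g : X -> int) : Prop :=
  exists h : X -> int, cont_int h /\ forall x, g x = h x - h (T x).

Definition real_coboundary (T : X -> X) (g : X -> R) : Prop :=
  exists F : X -> R, continuous F /\ forall x, g x = F x - F (T x).

Definition fracpart (t : R) : R := t - (Num.floor t)%:~R.

(* [g] = Theta(theta) in K^0(X,T):
   theta \in E(X,T), and for a clopen U with 1_U - {theta} a real coboundary,
   g - (floor(theta) 1_X + 1_U) is an integer coboundary. *)
Definition Theta_is (T : X -> X) (theta : R) (g : X -> int) : Prop :=
  eigen_angle T theta /\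
  exists U : set X,
    [/\ clopen_set U,
        real_coboundary T (fun x => \1_U x - fracpart theta) &
        int_coboundary T (fun x => g x - (Num.floor theta + \1_U x))].

Definition in_Theta_image (T : X -> X) (g : X -> int) : Prop :=
  exists theta : R, Theta_is T theta g.

End CantorDefs.

From Pilot Require Import Defs.
From HB Require Import structures.
From mathcomp Require Import all_boot all_order all_algebra.
From mathcomp Require Import all_classical all_reals all_analysis.
From mathcomp Require Import ring lra zify.
Import Order.TTheory GRing.Theory Num.Theory.
Import numFieldNormedType.Exports.
Local Open Scope classical_set_scope.
Local Open Scope ring_scope.

(* If n[g] = Theta(theta), adding the two coboundary equations that define Theta(theta)
   shows that n g - theta, hence g - theta/n, is a real coboundary F - F o T.  Then
   exp(2 pi i F) is an eigenfunction for theta/n, and with k = floor(theta/n) and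
   t = {theta/n} the function g - k - t is a real coboundary.  If t = 0, exp(2 pi i F) is
   T-invariant, hence constant by minimality, so F is integer-valued up to a constant and
   g - k is an integer coboundary; take U empty.  If 0 < t < 1, zero-dimensionality gives a
   continuous integer-valued h close to F, with G = F - h in (-d, 1 + d); the integer-valued
   function D = g - k - (h - h o T) equals t + G - G o T, so it only takes the values 0 and
   1, and U = {D = 1} satisfies 1_U - t = G - G o T and g - k - 1_U = h - h o T. *)

Lemma periodicz {U V : zmodType} [f : U -> V] [T : U] :
  periodic f T -> forall (z : int) a, f (a + T *~ z) = f a.
Proof.
move=> fT [] n a; first exact: periodicn.
by rewrite NegzE mulrNz -(periodicn fT n.+1) subrK.
Qed.

Section Trigonometry.
Context {R : realType}.
Implicit Types (u y : R) (z : int).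

Lemma cosD2piz y z : cos (y + 2 * pi * z%:~R) = cos y.
Proof. by rewrite mulrzr mulr_natl (periodicz (@cosD2pi R)). Qed.

Lemma sinD2piz y z : sin (y + 2 * pi * z%:~R) = sin y.
Proof. by rewrite mulrzr mulr_natl (periodicz (@sinD2pi R)). Qed.

Lemma fracpart_itv u : 0 <= fracpart u < 1.
Proof.
rewrite /fracpart subr_ge0 floor_le /=.
by have := floorD1_gt u; rewrite rmorphD /=; lra.
Qed.

Lemma cos2pi_eq1 u : cos (2 * pi * u) = 1 -> fracpart u = 0.
Proof.
have /andP[r_ge0 r_lt1] := fracpart_itv u; set r := fracpart u => cos1.
have {}cos1 : cos ((pi * r) *+ 2) = 1.
  rewrite -mulr_natl mulrA -[RHS]cos1.
  by rewrite /r /fracpart mulrBr -mulrN -rmorphN cosD2piz.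
have sin0 : sin (pi * r) = 0.
  apply/eqP; rewrite -sqrf_eq0 sin2cos2; apply/eqP.
  by move: cos1; rewrite cos_mulr2n; lra.
apply/eqP; rewrite eq_le r_ge0 andbT leNgt; apply/negP => r_gt0.
have pi_gt0 := @pi_gt0 R.
suff : 0 < sin (pi * r) by rewrite sin0 ltxx.
by apply: sin_gt0_pi; rewrite mulr_gt0 //= gtr_pMr.
Qed.

End Trigonometry.

Section IntegerValued.
Context {R : realType} {X : pseudoMetricType R}.
Implicit Types f : X -> int.

Lemma cont_intP f : cont_int f <-> forall x, \forall y \near x, f y = f x.
Proof.
split=> [fc x | f_near k].
  by have := fc (f x); rewrite openE => /(_ x erefl).
by rewrite openE => x /= <-; exact: f_near.
Qed.

Lemma cont_intE f : cont_int f <-> continuous (fun x => (f x)%:~R : R).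
Proof.
rewrite cont_intP; split=> [f_near x | fc x].
  by apply: near_cst_continuous; apply: filterS (f_near x) => y /= ->.
near=> y; have : `|(f y)%:~R - (f x)%:~R| < 1 :> R.
  by near: y; apply: cvgr_distC_lt => //; exact: fc.
rewrite -rmorphB -intr_norm -[1]/(1%:~R) ltr_int; lia.
Unshelve. all: by end_near. Qed.

Lemma cont_int_clopen f k : cont_int f -> clopen_set (f @^-1` [set k]).
Proof.
move=> fc; split; first exact: fc.
rewrite -[_ @^-1` _]setCK; apply: open_closedC.
have -> : ~` (f @^-1` [set k]) = \bigcup_(j in [set~ k]) f @^-1` [set j].
  by apply/seteqP; split=> x /=; [exists (f x) | case=> j /= jk ->].
by apply: bigcup_open => j _; exact: fc.
Qed.

End IntegerValued.

Lemma indic_preimage1 (S : pzRingType) (A : Type) (f : A -> int) x :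
  f x = 0 \/ f x = 1 -> \1_(f @^-1` [set 1]) x = (f x)%:~R :> S.
Proof.
by rewrite indicE; case=> fx; [rewrite memNset | rewrite mem_set]; rewrite /= fx.
Qed.

Section MinimalSystems.
Context {R : realType} {X : pseudoMetricType R} {T Tinv : X -> X}.
Hypothesis hT : homeo T Tinv.

Lemma zit_invariant (Y : Type) (phi : X -> Y) :
  (forall x, phi (T x) = phi x) -> forall n x, phi (zit T Tinv n x) = phi x.
Proof.
move=> phiT; have [_ _ _ TinvK] := hT.
have phiTinv z : phi (Tinv z) = phi z by rewrite -{2}(TinvK z) phiT.
have iter_inv (S : X -> X) : (forall z, phi (S z) = phi z) ->
    forall k z, phi (iter k S z) = phi z.
  by move=> phiS; elim=> //= k IH z; rewrite phiS IH.
by case=> k x; exact: iter_inv.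
Qed.

Lemma minimal_invariant_const {Y : topologicalType} (phi : X -> Y) :
  hausdorff_space Y -> minimal T Tinv -> continuous phi ->
  (forall x, phi (T x) = phi x) -> forall x y, phi y = phi x.
Proof.
move=> hY mT phic phiT x y.
have cl : closed (phi @^-1` [set phi x]).
  apply: preimage_closed; first by move=> z _; exact: phic.
  exact/accessible_closed_set1/hausdorff_accessible.
have orbit_sub : Defs.orbit T Tinv x `<=` phi @^-1` [set phi x].
  by move=> _ [n ->]; exact: zit_invariant.
have : closure (Defs.orbit T Tinv x) y by rewrite mT.
by move=> /(closureS orbit_sub); rewrite -(closure_id _).1.
Qed.

End MinimalSystems.

Lemma compact_finite_cover (X : topologicalType) (B : X -> set X) :
  compact [set: X] -> (forall x, nbhs x (B x)) ->
  exists s : seq X, forall y, exists2 x, x \in s & B x y.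
Proof.
move=> cmp Bx.
pose supersets := filter_from [set: seq X]
  (fun s0 : seq X => [set s : seq X | {subset s0 <= s}]).
have supersets_filter : Filter supersets.
  apply: filter_from_filter; first by exists [::].
  move=> s1 s2 _ _; exists (s1 ++ s2) => // s /= s12.
  by split=> x xs; apply: s12; rewrite mem_cat xs ?orbT.
have local_cover x : [set: X] x -> \forall y \near x & s \near supersets,
    exists2 x', x' \in s & B x' y.
  move=> _; exists (B x, [set s : seq X | x \in s]) => [|[y s] /= [Bxy xs]].
    by split=> //; exists [:: x] => // s /=; apply; rewrite inE.
  by exists x.
have [s0 _ cover] := (compact_near_coveringP _).1 cmp _ _ _ _ local_cover.
by exists s0 => y; exact: (cover s0).
Qed.

Section CoverSelection.
Context {X : topologicalType} {Y : Type} (B : X -> set X) (f : X -> Y) (y0 : Y).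

Definition cover_select (s : seq X) (y : X) : Y :=
  foldr (fun x v => if `[< B x y >] then f x else v) y0 s.

Lemma cover_selectP s y : (exists2 x, x \in s & B x y) ->
  exists2 x, B x y & cover_select s y = f x.
Proof.
elim: s => [[x //] | x s IH [x']] /=.
case: asboolP => [Bxy _ _ | nBxy]; first by exists x.
by rewrite inE => /predU1P [-> // | x's Bx'y]; apply: IH; exists x'.
Qed.

Lemma cover_select_near : (forall x, clopen (B x)) ->
  forall s y, \forall z \near y, cover_select s z = cover_select s y.
Proof.
move=> clB; elim=> [|x s IH] y /=; first exact: nearW.
have [oB cB] := clB x.
case: (asboolP (B x y)) => [Bxy | nBxy].
  by apply: filterS (open_nbhs_nbhs (conj oB Bxy)) => z Bxz; rewrite asboolT.
have : nbhs y (~` B x) by apply: open_nbhs_nbhs; split=> //; exact: closed_openC.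
by apply: filterS2 (IH y) => z -> nBxz; rewrite asboolF.
Qed.

End CoverSelection.

Lemma cont_int_approx {R : realType} {X : pseudoMetricType R} {F : X -> R} {d : R} :
  compact [set: X] -> hausdorff_space X -> zero_dimensional X ->
  continuous F -> 0 < d ->
  exists h : X -> int, cont_int h /\
    forall y, F y - d - 1 < (h y)%:~R < F y + d.
Proof.
move=> cmp hs zd Fc d_gt0.
have nbhs_clopen x : exists D : set X,
    [/\ clopen D, D x & forall y, D y -> `|F y - F x| < d].
  have F_near : \forall y \near x, `|F y - F x| < d.
    by apply: cvgr_distC_lt => //; exact: Fc.
  by have [D [Dx clD] DF] := zero_dimensional_cvg hs zd cmp F_near; exists D.
have [B HB] := choice nbhs_clopen.
have clB x : clopen (B x) by case: (HB x).
have [s cover] : exists s : seq X, forall y, exists2 x, x \in s & B x y.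
  apply: compact_finite_cover cmp _ => x; have [[oB _] Bxx _] := HB x.
  exact: open_nbhs_nbhs.
pose floorF x := Num.floor (F x).
exists (cover_select B floorF 0 s); split.
  by apply/cont_intP => y; exact: (cover_select_near _ _ _ clB).
move=> y; have [x Bxy ->] := cover_selectP B floorF 0 _ _ (cover y).
have [_ _ /(_ y Bxy)] := HB x; rewrite ltr_norml => /andP[lb ub].
have := floor_le (F x); have := floorD1_gt (F x); rewrite rmorphD /=; lra.
Qed.

Section Coboundaries.
Context {R : realType} {X : pseudoMetricType R} {T : X -> X}.

Lemma real_coboundaryZ (c : R) [f : X -> R] :
  real_coboundary T f -> real_coboundary T (fun x => c * f x).
Proof.
case=> F [Fc fE]; exists (fun x => c * F x); split; last by move=> x; rewrite fE mulrBr.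
by move=> x; apply: cvgMl_tmp; exact: Fc.
Qed.

Lemma Theta_is_real_coboundary theta g :
  Theta_is T theta g -> real_coboundary T (fun x => (g x)%:~R - theta).
Proof.
case=> _ [U [_ [F0 [F0c F0E]] [h [hc hE]]]].
exists (fun x => (h x)%:~R + F0 x); split.
  by move=> x; apply: cvgD; [exact: ((cont_intE h).1 hc x) | exact: F0c].
move=> x; have := congr1 (fun z : int => z%:~R : R) (hE x).
rewrite !rmorphB !rmorphD /= indicE rmorph_nat -indicE.
by have := F0E x; rewrite /fracpart; lra.
Qed.

Lemma continuous_cos2pi (F : X -> R) :
  continuous F -> continuous (fun x => cos (2 * pi * F x)).
Proof.
move=> Fc x; apply: continuous_comp; last exact: continuous_cos.
by apply: cvgMl_tmp; exact: Fc.
Qed.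

Lemma continuous_sin2pi (F : X -> R) :
  continuous F -> continuous (fun x => sin (2 * pi * F x)).
Proof.
move=> Fc x; apply: continuous_comp; last exact: continuous_sin.
by apply: cvgMl_tmp; exact: Fc.
Qed.

Lemma real_coboundary_eigen_angle (g : X -> int) theta :
  real_coboundary T (fun x => (g x)%:~R - theta) -> eigen_angle T theta.
Proof.
case=> F [Fc FE].
have angleT x : 2 * pi * F (T x) = 2 * pi * F x + 2 * pi * theta + 2 * pi * (- g x)%:~R.
  by rewrite rmorphN /= -!mulrDr; congr (_ * _); have := FE x; lra.
exists (fun x => cos (2 * pi * F x)), (fun x => sin (2 * pi * F x)); split.
- exact: continuous_cos2pi.
- exact: continuous_sin2pi.
- by move=> x; rewrite cos2Dsin2.
- by move=> x; rewrite angleT cosD2piz sinD2piz cosD sinD; split; ring.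
Qed.

Lemma int_coboundary_of_real {Tinv : X -> X} {g : X -> int} :
  homeo T Tinv -> minimal T Tinv -> [set: X] !=set0 ->
  real_coboundary T (fun x => (g x)%:~R) -> int_coboundary T g.
Proof.
move=> hT mT [x0 _] [F [Fc FE]].
pose phi x := cos (2 * pi * (F x - F x0)).
have phic : continuous phi.
  by apply: continuous_cos2pi => x; apply: cvgB; [exact: Fc | exact: cvg_cst].
have phiT x : phi (T x) = phi x.
  have angleT : 2 * pi * (F (T x) - F x0) = 2 * pi * (F x - F x0) + 2 * pi * (- g x)%:~R.
    by rewrite rmorphN /= -mulrDr; congr (_ * _); have := FE x; lra.
  by rewrite /phi angleT cosD2piz.
have phi1 x : phi x = 1.
  rewrite (minimal_invariant_const hT phi (@Rhausdorff R) mT phic phiT x0 x).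
  by rewrite /phi subrr mulr0 cos0.
pose h x := Num.floor (F x - F x0).
have hE x : (h x)%:~R = F x - F x0.
  by have /eqP := cos2pi_eq1 _ (phi1 x); rewrite subr_eq0 => /eqP.
exists h; split.
  apply/cont_intE; rewrite (funext hE) => x.
  by apply: cvgB; [exact: Fc | exact: cvg_cst].
by move=> x; apply: (@intr_inj R); rewrite rmorphB /= !hE FE; ring.
Qed.

Lemma real_coboundary_frac_split {g : X -> int} {t : R} :
  compact [set: X] -> hausdorff_space X -> zero_dimensional X -> continuous T ->
  0 < t < 1 -> real_coboundary T (fun x => (g x)%:~R - t) ->
  exists2 V, clopen_set V &
    real_coboundary T (fun x => \1_V x - t) /\
    int_coboundary T (fun x => g x - \1_V x).
Proof.
move=> cmp hs zd Tc /andP[t_gt0 t_lt1] [F [Fc FE]].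
(* [d] is small enough that [(t - 1 - 2d, t + 1 + 2d)] contains no integer but 0 and 1. *)
pose d := t * (1 - t) / 2.
have d_gt0 : 0 < d by apply: divr_gt0 => //; apply: mulr_gt0; lra.
have [d_lt_t t_d_lt1] : 2 * d < t /\ t + 2 * d < 1 by rewrite /d; split; nra.
have [h [hc h_near]] := cont_int_approx cmp hs zd Fc d_gt0.
pose G x := F x - (h x)%:~R.
have Gc : continuous G.
  by move=> x; apply: cvgB; [exact: Fc | exact: ((cont_intE h).1 hc x)].
have G_itv y : - d < G y < 1 + d by have := h_near y; rewrite /G; lra.
pose D x := g x - (h x - h (T x)).
have DE x : (D x)%:~R = t + G x - G (T x).
  by rewrite /D /G !rmorphB /=; have := FE x; lra.
have D01 x : D x = 0 \/ D x = 1.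
  have : -1 < ((D x)%:~R : R) < 2.
    by rewrite DE; have := G_itv x; have := G_itv (T x); lra.
  by rewrite -[-1 : R]/((-1 : int)%:~R) -[2 : R]/((2 : int)%:~R) !ltr_int; lia.
have Dc : cont_int D.
  apply/cont_intE; rewrite (funext DE) => x.
  apply: cvgB; first by apply: cvgD; [exact: cvg_cst | exact: Gc].
  by apply: continuous_comp; [exact: Tc | exact: Gc].
exists (D @^-1` [set 1]); first exact: cont_int_clopen.
split; first by exists G; split=> // x; rewrite indic_preimage1 // DE; ring.
by exists h; split=> // x; rewrite indic_preimage1 // intz /D; ring.
Qed.

Lemma Theta_is_of_real_coboundary {Tinv : X -> X} {g : X -> int} {theta : R} :
  cantor_set X -> homeo T Tinv -> minimal T Tinv ->
  real_coboundary T (fun x => (g x)%:~R - theta) -> Theta_is T theta g.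
Proof.
move=> [[_ cmp hs zd] X0] hT mT cob.
split; first exact: real_coboundary_eigen_angle cob.
have /andP[t_ge0 t_lt1] := fracpart_itv theta.
set k := Num.floor theta; set t := fracpart theta.
have cobk : real_coboundary T (fun x => (g x - k)%:~R - t).
  case: cob => F [Fc FE]; exists F; split=> // x.
  by rewrite -FE rmorphB /t /fracpart; ring.
have [t_gt0 | t_le0] := ltrP 0 t.
  have Tc : continuous T by case: hT.
  have t_itv : 0 < t < 1 by rewrite t_gt0.
  have [V clV [V_cob [h [hc hE]]]] :=
    real_coboundary_frac_split cmp hs zd Tc t_itv cobk.
  exists V; split=> //; exists h; split=> // x.
  by rewrite -hE opprD addrA.
have t0 : t = 0 by apply/eqP; rewrite eq_le t_le0.
have [|h [hc hE]] := int_coboundary_of_real hT mT X0 (g := fun x => g x - k).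
  by case: cobk => F [Fc FE]; exists F; split=> // x; rewrite -FE t0 subr0.
exists set0; split.
- by split; [exact: open0 | exact: closed0].
- exists (fun=> 0); split; first by move=> x; exact: cvg_cst.
  by move=> x; rewrite indicE in_set0 t0 subrr.
- by exists h; split=> // x; rewrite indicE in_set0 addr0 -hE.
Qed.

End Coboundaries.

Theorem mainTheorem6 (R : realType) (X : pseudoMetricType R) (T Tinv : X -> X) :
  cantor_set X -> homeo T Tinv -> minimal T Tinv ->
  forall (g : X -> int) (n : nat), (0 < n)%N -> cont_int g ->
    in_Theta_image T (fun x => g x *+ n) -> in_Theta_image T g.
Proof.
move=> cX hT mT g n n_gt0 _ [theta /Theta_is_real_coboundary ng_cob].
exists (theta / n%:R); apply: Theta_is_of_real_coboundary cX hT mT _.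
case: (real_coboundaryZ (n%:R)^-1 ng_cob) => F [Fc FE]; exists F; split=> // x.
rewrite -FE rmorphMn /= -mulr_natr; field.
by rewrite pnatr_eq0 -lt0n.
Qed.
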